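(* Let $A\in\mathcal S_{0,1}$. Then $LJ=J$ and $L(i_VF)=\frac12 i_VF$ for every $V\in\mathbb R^n$.
   Context: $G\subset SO(r)$ compact with Lie algebra $\mathfrak g$; $E$ the trivial $G$-vector bundle over $\mathbb R^n$. Connection $A=A_idx^i$, curvature $F_{ij}=\partial_iA_j-\partial_jA_i+[A_i,A_j]$; repeated indices summed; $\nabla_pT=\partial_pT+[A_p,T]$. $J=\nabla_pF_{pj}dx^j$, $i_VF=V^pF_{pj}dx^j$. $\mathcal S_{0,1}$: connections with $\nabla_pF_{pj}-\frac12x^pF_{pj}=0$ for all $j$ and $\sup|\nabla^kA|<\infty$ for all $k\ge1$. For a $\mathfrak g$-valued 1-form $\theta$: $((d^\nabla)^*d^\nabla\theta)_j=-\nabla_p(\nabla_p\theta_j-\nabla_j\theta_p)$, $\mathcal R(\theta)_j=[F_{pj},\theta_p]$, $(i_{x/2}d^\nabla\theta)_j=\frac12x^k(\nabla_k\theta_j-\nabla_j\theta_k)$, and $L\theta=-[(d^\nabla)^*d^\nabla\theta+\mathcal R(\theta)+i_{x/2}d^\nabla\theta]$. *)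

From HB Require Import structures.
From mathcomp Require Import all_boot all_order all_algebra.
From mathcomp Require Import all_classical all_reals all_analysis.
Set Implicit Arguments. Unset Strict Implicit. Unset Printing Implicit Defensive.
Import Order.TTheory GRing.Theory Num.Theory.
Import numFieldNormedType.Exports.
Local Open Scope ring_scope.

Section YM.
Variables (R : realType) (n r : nat).

(* points of R^n are row vectors; x^p is the coordinate x 0 p *)
Definition coord (x : 'rV[R]_n) (p : 'I_n) : R := x ord0 p.

Definition ebasis (i : 'I_n) : 'rV[R]_n := delta_mx ord0 i.

Definition dP (i : 'I_n) (f : 'rV[R]_n -> 'M[R]_r) : 'rV[R]_n -> 'M[R]_r :=
  fun x => \matrix_(a, b) ('D_(ebasis i) (fun y => f y a b) x).

Definition iterD (s : seq 'I_n) (f : 'rV[R]_n -> 'M[R]_r) : 'rV[R]_n -> 'M[R]_r :=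
  foldr dP f s.

Definition smooth_mx (f : 'rV[R]_n -> 'M[R]_r) : Prop :=
  forall (s : seq 'I_n) (i : 'I_n) (x : 'rV[R]_n) (a b : 'I_r),
    derivable (fun y => iterD s f y a b) x (ebasis i).

Definition lie (M N : 'M[R]_r) : 'M[R]_r := M *m N - N *m M.

Definition lie_subalg_so (g : set 'M[R]_r) : Prop :=
  [/\ g 0, (forall M N, g M -> g N -> g (M + N)),
      (forall (c : R) M, g M -> g (c *: M)),
      (forall M, g M -> M^T = - M) &
      (forall M N, g M -> g N -> g (lie M N))].

(* a connection A = A_i dx^i, a g-valued 1-gform *)
Definition gform := 'I_n -> 'rV[R]_n -> 'M[R]_r.

Variable A : gform.

Definition curv (i j : 'I_n) : 'rV[R]_n -> 'M[R]_r :=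
  fun x => dP i (A j) x - dP j (A i) x + lie (A i x) (A j x).

Definition nabla (p : 'I_n) (T : 'rV[R]_n -> 'M[R]_r) : 'rV[R]_n -> 'M[R]_r :=
  fun x => dP p T x + lie (A p x) (T x).

Definition Jform : gform := fun j x => \sum_p nabla p (curv p j) x.

Definition iVF (V : 'rV[R]_n) : gform := fun j x => \sum_p coord V p *: curv p j x.

Definition soliton_eq : Prop :=
  forall j x, \sum_p nabla p (curv p j) x - 2^-1 *: \sum_p coord x p *: curv p j x = 0.

(* sup |nabla^k A| < oo for all k >= 1, read as: all k-th order partial
   derivatives of the components of A are bounded on R^n *)
Definition bounded_derivs : Prop :=
  forall (s : seq 'I_n), (0 < size s)%N -> forall i, exists C : R,
    forall x a b, `|iterD s (A i) x a b| <= C.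

Definition dstard (th : gform) : gform :=
  fun j x => - \sum_p nabla p (fun y => nabla p (th j) y - nabla j (th p) y) x.

Definition Rterm (th : gform) : gform :=
  fun j x => \sum_p lie (curv p j x) (th p x).

Definition ixd (th : gform) : gform :=
  fun j x => 2^-1 *: \sum_k coord x k *: (nabla k (th j) x - nabla j (th k) x).

Definition Lop (th : gform) : gform :=
  fun j x => - (dstard th j x + Rterm th j x + ixd th j x).

End YM.

Definition S01 (R : realType) (n r : nat) (g : set 'M[R]_r) (A : gform R n r) : Prop :=
  [/\ (forall i x, g (A i x)), (forall i, smooth_mx (A i)),
      soliton_eq A & bounded_derivs A].

From Pilot Require Import Defs.
From HB Require Import structures.
From mathcomp Require Import all_boot all_order all_algebra.
From mathcomp Require Import all_classical all_reals all_analysis.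
From mathcomp Require Import ring lra.

(* Contract the curvature with the vector field W = v + be x, giving the
   1-form theta_j = W^p F_pj.  Using only the Leibniz rule, the Ricci identity
   [nabla_k, nabla_p] = [F_kp, .], the Bianchi identity, antisymmetry of F and
   the soliton equation nabla_p F_pj = x^p F_pj / 2 (i.e. J = i_{x/2} F), a
   direct computation gives L theta = be J + theta / 2.  Then v = 0, be = 1/2
   gives L J = J, and v = V, be = 0 gives L (i_V F) = i_V F / 2.
   The Ricci identity needs the symmetry of second partial derivatives; here
   all iterated partials merely exist, so the mixed partials are only known to
   be separately continuous, and Schwarz's theorem is proved with the Baire
   category theorem. *)

Set Implicit Arguments. Unset Strict Implicit. Unset Printing Implicit Defensive.
Import Order.TTheory GRing.Theory Num.Theory.
Import numFieldNormedType.Exports.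
Local Open Scope ring_scope.

Section Schwarz.
Variable R : realType.
Local Open Scope classical_set_scope.

Lemma is_derive_continuous (f df : R -> R) :
  (forall x, is_derive x (1 : R) f (df x)) -> continuous f.
Proof.
move=> fdf x; apply/differentiable_continuous; rewrite -derivable1_diffP.
by case: (fdf x).
Qed.

Lemma MVT_dist (f df : R -> R) (a b : R) :
  (forall x, is_derive x (1 : R) f (df x)) ->
  exists c, `|c - a| <= `|b - a| /\ f b - f a = df c * (b - a).
Proof.
move=> fdf; have fc := is_derive_continuous fdf.
have fcI u v : {within `[u, v], continuous f} by exact: continuous_subspaceT.
case: (lerP a b) => ab.
  have [c cab E] := MVT_segment ab (fun x _ => fdf x) (fcI a b).
  exists c; split => //; move: cab; rewrite in_itv /= => /andP[ac cb].
  by rewrite !ger0_norm ?subr_ge0 //; lra.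
have [c cab E] := MVT_segment (ltW ab) (fun x _ => fdf x) (fcI b a).
exists c; split; last by rewrite -opprB E -mulrN opprB.
move: cab; rewrite in_itv /= => /andP[bc ca].
by rewrite !ler0_norm ?subr_le0 ?(ltW ab) //; lra.
Qed.

Lemma is_derive_quotient_cvg (f : R -> R) x df : is_derive x (1 : R) f df ->
  (fun h => h^-1 * (f (h + x) - f x)) @ 0^' --> df.
Proof.
move=> [fx <-].
have -> : (fun h => h^-1 * (f (h + x) - f x)) =
          (fun h => h^-1 *: ((f \o shift x) (h *: 1) - f x)).
  by apply/funext => h /=; rewrite /shift /= [_ *: 1]mulr1.
exact: fx.
Qed.

Lemma closed_norm_le (f : R -> R) c : continuous f -> closed [set u | `|f u| <= c].
Proof.
move=> fc; rewrite -[X in closed X]/((fun y => `|f y|) @^-1` [set z | z <= c]).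
apply: preimage_closed; last exact: closed_le.
move=> y _; apply: (@continuous_comp _ _ _ f (@Num.norm _ R)); first exact: fc.
exact: norm_continuous.
Qed.

Lemma cvg_dist_le (T : Type) (F : set_system T) {FF : ProperFilter F}
    (f : T -> R) l c e :
  f @ F --> l -> (\forall k \near F, `|f k - c| <= e) -> `|l - c| <= e.
Proof.
move=> fl fle; have cl : closed [set y : R | `|y - c| <= e].
  by apply: (closed_norm_le (f := fun y => y - c)) => y; apply: cvgB;
    [exact: cvg_id | exact: cvg_cst].
exact: (closed_cvg _ cl fle _ fl).
Qed.

Lemma continuous_dist_lt (f : R -> R) x e : 0 < e -> {for x, continuous f} ->
  exists2 d, 0 < d & forall y, `|x - y| < d -> `|f y - f x| < e.
Proof.
move=> e0 /cvgr_dist_lt /(_ _ e0) /nbhs_ballP[d d0 fd].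
by exists d => // y /fd /=; rewrite distrC.
Qed.

Section MixedPartials.
Variables G Gs Gt a b : R -> R -> R.
Hypothesis G_s : forall s t, is_derive s (1 : R) (G^~ t) (Gs s t).
Hypothesis G_t : forall s t, is_derive t (1 : R) (G s) (Gt s t).
Hypothesis Gs_t : forall s t, is_derive t (1 : R) (Gs s) (a s t).
Hypothesis Gt_s : forall s t, is_derive s (1 : R) (Gt^~ t) (b s t).

(* [b s1 t] is a limit of double difference quotients of [G], each of which is a
   value of [a] near [(s1, t)] by two applications of the mean value theorem. *)
Lemma mixed_partials_dist_le s1 t e d : 0 < d ->
    (forall u v, `|u - s1| < d -> `|v - t| < d -> `|a u v - a s1 t| <= e) ->
  `|b s1 t - a s1 t| <= e.
Proof.
move=> d0 a_near.
apply: (cvg_dist_le (is_derive_quotient_cvg (Gt_s s1 t))); near=> h.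
have h0 : h != 0 by near: h; exact: nbhs_dnbhs_neq.
have hd : `|h| < d by near: h; exact: dnbhs0_lt.
have quot_cvg : (fun k => h^-1 * (k^-1 * (G (h + s1) (k + t) - G (h + s1) t)
                    - k^-1 * (G s1 (k + t) - G s1 t)))
                @ 0^' --> h^-1 * (Gt (h + s1) t - Gt s1 t).
  by apply: cvgMl_tmp; apply: cvgB; exact: is_derive_quotient_cvg.
apply: (cvg_dist_le quot_cvg); near=> k.
have k0 : k != 0 by near: k; exact: nbhs_dnbhs_neq.
have kd : `|k| < d by near: k; exact: dnbhs0_lt.
have [xi [xi_near Exi]] := MVT_dist s1 (h + s1)
  (fun u => is_deriveB (G_s u (k + t)) (G_s u t)).
have [eta [eta_near Eeta]] := MVT_dist t (k + t) (Gs_t xi).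
have -> : h^-1 * (k^-1 * (G (h + s1) (k + t) - G (h + s1) t)
            - k^-1 * (G s1 (k + t) - G s1 t)) = a xi eta.
  rewrite -mulrBr; move: Exi; rewrite /= => ->; rewrite Eeta !addrK; field.
  by rewrite h0 k0.
apply: a_near.
  by apply: le_lt_trans xi_near _; rewrite addrK.
by apply: le_lt_trans eta_near _; rewrite addrK.
Unshelve. all: by end_near.
Qed.

End MixedPartials.

(* Baire: the closed sets [E m] of those [u] for which [a u] varies by at most
   [e/2] on the [1/(m+1)]-ball around [t] cover the line, so some [E m] has
   interior points close to [s0]; there [a] is controlled jointly. *)
Lemma separately_continuous_joint_point (a : R -> R -> R) :
    (forall t, continuous (a^~ t)) -> (forall s, continuous (a s)) ->
  forall s0 t e d, 0 < e -> 0 < d ->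
  exists s1, `|s1 - s0| < d /\ exists2 d', 0 < d' &
    forall u v, `|u - s1| < d' -> `|v - t| < d' -> `|a u v - a s1 t| <= e.
Proof.
move=> ca1 ca2 s0 t e d e0 d0.
have e20 : 0 < e / 2 by rewrite divr_gt0.
have d20 : 0 < d / 2 by rewrite divr_gt0.
pose E (m : nat) := [set u | forall v, `|v - t| <= m.+1%:R^-1 ->
                                       `|a u v - a u t| <= e / 2].
pose C := closed_ball s0 (d / 2).
have clE m : closed (E m).
  have -> : E m = \bigcap_(v in [set v | `|v - t| <= m.+1%:R^-1])
                    [set u | `|a u v - a u t| <= e / 2].
    by apply/seteqP; split => u /= Eu v /Eu.
  apply: closed_bigI => v _; apply: closed_norm_le => u.
  by apply: cvgB; exact: ca1.
pose O m := ~` (E m `&` C).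
have oO m : open (O m) by rewrite /O openC; apply: closedI => //;
  exact: closed_ball_closed.
case: (pselect (forall m, dense (O m))) => [Odense|].
  have [|| u [Bu Ou]] := @Baire R R O (fun i => conj (oO i) (Odense i))
    (ball s0 (d / 2)); [by exists s0; exact: ballxx | exact: ball_open |].
  have /cvgr_dist_lt /(_ _ e20) /nbhs_ballP[r r0 ar] := ca2 u t.
  have [m _ /(_ m (leqnn m)) /= mr] := near_infty_natSinv_lt (PosNum r0).
  case: (Ou m I); split; last exact: subset_closed_ball.
  move=> v vt; rewrite distrC; apply/ltW/ar.
  by rewrite /ball /= distrC; apply: le_lt_trans vt mr.
move=> /existsNP[m /denseNE[D [[x [oD Dx]] DO]]].
have [Exm Cx] : (E m `&` C) x.
  apply: contrapT => nx.
  by have : (D `&` O m) x by []; rewrite DO.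
have /nbhs_ballP[r1 r10 Dr1] := open_nbhs_nbhs (conj oD Dx).
have [r2 r20 ar2] := continuous_dist_lt e20 (ca1 t x).
have m0 : 0 < m.+1%:R^-1 :> R by rewrite invr_gt0 ltr0n.
exists x; split.
  move: Cx; rewrite /C closed_ballE // /closed_ball_ /= distrC => xs0.
  by apply: le_lt_trans xs0 _; rewrite ltr_pdivrMr // ltr_pMr // ltr1n.
exists (Num.min (Num.min r1 r2) m.+1%:R^-1); first by rewrite !lt_min r10 r20 m0.
move=> u v; rewrite !lt_min => /andP[/andP[ur1 ur2] _] /andP[/andP[_ _] vm].
have Du : D u by apply: Dr1; rewrite /ball /= distrC.
have Eu : E m u.
  apply: contrapT => nu.
  have DOu : (D `&` O m) u by split => // -[].
  by rewrite DO in DOu.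
have avt := Eu v (ltW vm).
have aut : `|a u t - a x t| < e / 2 by apply: ar2; rewrite distrC.
apply: le_trans (ler_distD (a u t) _ _) _.
by rewrite [e in _ <= e](splitr e) lerD // ltW.
Qed.

Lemma schwarz_plane (G Gs Gt a b : R -> R -> R) :
    (forall s t, is_derive s (1 : R) (G^~ t) (Gs s t)) ->
    (forall s t, is_derive t (1 : R) (G s) (Gt s t)) ->
    (forall s t, is_derive t (1 : R) (Gs s) (a s t)) ->
    (forall s t, is_derive s (1 : R) (Gt^~ t) (b s t)) ->
    (forall t, continuous (a^~ t)) -> (forall s, continuous (a s)) ->
    (forall t, continuous (b^~ t)) ->
  forall s t, a s t = b s t.
Proof.
move=> G_s G_t Gs_t Gt_s ca1 ca2 cb1 s0 t.
apply/eqP; rewrite eq_sym -subr_eq0 -normr_le0.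
apply/ler_addgt0Pr => e e0; rewrite add0r.
have e20 : 0 < e / 2 by rewrite divr_gt0.
have cba : {for s0, continuous (fun u => b u t - a u t)}.
  by apply: cvgB; [exact: cb1 | exact: ca1].
have [d d0 bad] := continuous_dist_lt e20 cba.
have [s1 [s1d [d' d'0 a_near]]] :=
  separately_continuous_joint_point ca1 ca2 s0 t e20 d0.
have bas1 := mixed_partials_dist_le G_s G_t Gs_t Gt_s d'0 a_near.
have bas0 : `|b s1 t - a s1 t - (b s0 t - a s0 t)| < e / 2.
  by apply: bad; rewrite distrC.
have := ler_distD (b s1 t - a s1 t) (b s0 t - a s0 t) 0.
rewrite !subr0 => /le_trans; apply.
by rewrite [e in _ <= e](splitr e) lerD // ?ltW // distrC.
Qed.

End Schwarz.

Lemma is_derive_line (R : realType) (V : normedModType R) (f : V -> R) v y c df :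
  is_derive (c *: v + y) v f df -> is_derive c (1 : R) (fun u => f (u *: v + y)) df.
Proof.
have Q : (fun h : R => h^-1 *: (((fun u => f (u *: v + y)) \o shift c) (h *: 1)
             - f (c *: v + y)))
       = (fun h : R => h^-1 *: ((f \o shift (c *: v + y)) (h *: v) - f (c *: v + y))).
  by apply/funext => h /=; rewrite /shift /= [_ *: 1]mulr1 scalerDl addrA.
by case=> fd fdf; split; rewrite /derivable /derive Q.
Qed.

Lemma schwarz_derive (R : realType) (V : normedModType R) (f : V -> R) (u v : V) :
    (forall x, derivable f x u) -> (forall x, derivable f x v) ->
    (forall x, derivable ('D_u f) x v) -> (forall x, derivable ('D_v f) x u) ->
    (forall x, derivable ('D_v ('D_u f)) x u) ->
    (forall x, derivable ('D_v ('D_u f)) x v) ->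
    (forall x, derivable ('D_u ('D_v f)) x u) ->
  forall x, 'D_v ('D_u f) x = 'D_u ('D_v f) x.
Proof.
move=> fu fv fuv fvu fuvu fuvv fvuu x.
pose P s t := s *: u + (t *: v + x).
have PC s t : t *: v + (s *: u + x) = P s t by rewrite /P addrCA.
have along_u (h : V -> R) t dh : (forall s, is_derive (P s t) u h (dh s)) ->
    forall s, is_derive s (1 : R) (fun s => h (P s t)) (dh s).
  by move=> hdh s; exact: is_derive_line.
have along_v (h : V -> R) s dh : (forall t, is_derive (P s t) v h (dh t)) ->
    forall t, is_derive t (1 : R) (fun t => h (P s t)) (dh t).
  move=> hdh t; rewrite (_ : (fun t => h (P s t)) = (fun t => h (t *: v + (s *: u + x)))).
    by apply: is_derive_line; rewrite PC.
  by apply/funext => t'; rewrite PC.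
have := @schwarz_plane R (fun s t => f (P s t)) (fun s t => 'D_u f (P s t))
  (fun s t => 'D_v f (P s t)) (fun s t => 'D_v ('D_u f) (P s t))
  (fun s t => 'D_u ('D_v f) (P s t))
  (fun s t => along_u f t _ (fun s => derivableP (fu _)) s)
  (fun s t => along_v f s _ (fun t => derivableP (fv _)) t)
  (fun s t => along_v _ s _ (fun t => derivableP (fuv _)) t)
  (fun s t => along_u _ t _ (fun s => derivableP (fvu _)) s)
  (fun t => is_derive_continuous (along_u _ t _ (fun s => derivableP (fuvu _))))
  (fun s => is_derive_continuous (along_v _ s _ (fun t => derivableP (fuvv _))))
  (fun t => is_derive_continuous (along_u _ t _ (fun s => derivableP (fvuu _)))).
by move=> /(_ 0 0); rewrite /P !scale0r !add0r.
Qed.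

Section LieBracket.
Variables (R : realType) (r : nat).
Implicit Types X Y Z : 'M[R]_r.

Lemma lieDr X Y Z : lie X (Y + Z) = lie X Y + lie X Z.
Proof. by rewrite /lie mulmxDl mulmxDr opprD addrACA. Qed.

Lemma lieNr X Y : lie X (- Y) = - lie X Y.
Proof. by rewrite /lie mulmxN mulNmx opprB opprK addrC. Qed.

Lemma lieZr (c : R) X Y : lie X (c *: Y) = c *: lie X Y.
Proof. by rewrite /lie -scalemxAl -scalemxAr scalerBr. Qed.

Lemma lie_sumr m X (Y : 'I_m -> 'M[R]_r) : lie X (\sum_p Y p) = \sum_p lie X (Y p).
Proof. by rewrite /lie mulmx_sumr mulmx_suml -sumrB. Qed.

Lemma lie_anti X Y : lie X Y = - lie Y X.
Proof. by rewrite /lie opprB. Qed.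

End LieBracket.

(* [lmod K] proves identities in a [K]-module by reflection: both sides are
   reified over their common atoms, and the coefficients of each atom, which
   are expressions in the commutative ring [K], are compared by [ring]. *)
Inductive lexpr (K : Type) :=
  LAtom of nat | LZero | LAdd of lexpr K & lexpr K | LOpp of lexpr K
| LScale of K & lexpr K.
Arguments LZero {K}.

Section LinearExpressions.
Variables (K : pzRingType) (V : lmodType K).

Fixpoint lexpr_eval (l : seq V) (e : lexpr K) : V :=
  match e with
  | LAtom k => nth 0 l k
  | LZero => 0
  | LAdd a b => lexpr_eval l a + lexpr_eval l b
  | LOpp a => - lexpr_eval l a
  | LScale c a => c *: lexpr_eval l a
  end.

Fixpoint lexpr_coef (e : lexpr K) (k : nat) : K :=
  match e with
  | LAtom j => if eqn j k then 1 else 0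
  | LZero => 0
  | LAdd a b => lexpr_coef a k + lexpr_coef b k
  | LOpp a => - lexpr_coef a k
  | LScale c a => c * lexpr_coef a k
  end.

Lemma lexpr_evalE (l : seq V) e N : (size l <= N)%N ->
  lexpr_eval l e = \sum_(k < N) lexpr_coef e k *: nth 0 l k.
Proof.
move=> lN; elim: e => [j||a IHa b IHb|a IHa|c a IHa] /=.
- rewrite eqnE; case: (ltnP j N) => jN.
    rewrite (bigD1 (Ordinal jN)) //= eqxx scale1r big1 ?addr0 // => k.
    by rewrite -val_eqE /= eq_sym => /negbTE ->; rewrite scale0r.
  rewrite nth_default ?(leq_trans lN) // big1 // => k _.
  have : j != k by rewrite neq_ltn (leq_trans (ltn_ord k) jN) orbT.
  by move/negbTE ->; rewrite scale0r.
- by rewrite big1 // => k _; rewrite scale0r.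
- by rewrite IHa IHb -big_split /=; apply: eq_bigr => k _; rewrite scalerDl.
- by rewrite IHa -sumrN; apply: eq_bigr => k _; rewrite scaleNr.
- by rewrite IHa scaler_sumr; apply: eq_bigr => k _; rewrite scalerA.
Qed.

Lemma lexpr_eval_eq (l : seq V) e1 e2 N : (size l <= N)%N ->
  (forall k, (k < N)%N -> lexpr_coef e1 k = lexpr_coef e2 k) ->
  lexpr_eval l e1 = lexpr_eval l e2.
Proof.
move=> lN e12; rewrite !(@lexpr_evalE l _ N lN).
by apply: eq_bigr => k _; rewrite e12.
Qed.

End LinearExpressions.

Ltac lconv_bool h t :=
  constr:(ltac:(tryif unify h t then exact true else exact false) : bool).

Ltac lins t l :=
  lazymatch l with
  | nil => constr:(t :: nil)
  | ?h :: ?l' =>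
    lazymatch lconv_bool h t with
    | true => l
    | false => let l'' := lins t l' in constr:(h :: l'')
    end
  end.

Ltac latoms t l :=
  lazymatch t with
  | @GRing.add _ ?a ?b => let l1 := latoms a l in latoms b l1
  | @GRing.opp _ ?a => latoms a l
  | @GRing.zero _ => l
  | @GRing.scale _ _ _ ?a => latoms a l
  | _ => lins t l
  end.

Ltac lidx t l :=
  lazymatch l with
  | ?h :: ?l' =>
    lazymatch lconv_bool h t with
    | true => constr:(0%N)
    | false => let k := lidx t l' in constr:(k.+1)
    end
  end.

Ltac lreif K t l :=
  lazymatch t with
  | @GRing.add _ ?a ?b =>
    let x := lreif K a l in let y := lreif K b l in constr:(@LAdd K x y)
  | @GRing.opp _ ?a => let x := lreif K a l in constr:(@LOpp K x)
  | @GRing.zero _ => constr:(@LZero K)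
  | @GRing.scale _ _ ?c ?a => let x := lreif K a l in constr:(@LScale K c x)
  | _ => let k := lidx t l in constr:(@LAtom K k)
  end.

Ltac lcases k N :=
  lazymatch N with
  | 0%N => let H := fresh in move=> H; exfalso; exact: (notF H)
  | ?N'.+1 => case: k => [|k]; [move=> _; cbn [lexpr_coef eqn] | lcases k N']
  end.

Ltac lmod_split K :=
  lazymatch goal with
  | |- @eq ?T ?x ?y =>
    let l := latoms y ltac:(latoms x (@nil T)) in
    let ex := lreif K x l in
    let ey := lreif K y l in
    let N := eval compute in (size l) in
    refine (@lexpr_eval_eq K _ l ex ey N (leqnn N) _);
    let k := fresh "k" in move=> k; lcases k N
  end.

Ltac lmod K := lmod_split K; ring.

Section SmoothFields.
Variables (R : realType) (n r : nat).
Local Notation field := ('rV[R]_n -> 'M[R]_r).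
Implicit Types f g : field.
Local Notation eb i := (@ebasis R n i).
Local Open Scope classical_set_scope.

Definition derivable_mx f :=
  forall i x (a b : 'I_r), derivable (fun y => f y a b) x (eb i).

Definition derivable_upto N f :=
  forall s, (size s < N)%N -> derivable_mx (Defs.iterD s f).

Lemma iterD_rcons s i f : Defs.iterD (rcons s i) f = Defs.iterD s (dP i f).
Proof. by rewrite /Defs.iterD foldr_rcons. Qed.

Lemma smooth_mxE f : smooth_mx f <-> forall N, derivable_upto N f.
Proof.
split=> [fs N s _ i x a b | fN s i x a b]; first exact: fs.
exact: (fN (size s).+1 s).
Qed.

Lemma derivable_upto_le M N f :
  (M <= N)%N -> derivable_upto N f -> derivable_upto M f.
Proof. by move=> MN fN s sM; apply: fN; exact: leq_trans sM MN. Qed.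

Lemma derivable_upto_dP N i f : derivable_upto N.+1 f -> derivable_upto N (dP i f).
Proof. by move=> fN s sN; rewrite -iterD_rcons; apply: fN; rewrite size_rcons. Qed.

Lemma dP_entry i f (a b : 'I_r) :
  (fun y => dP i f y a b) = 'D_(eb i) (fun y => f y a b).
Proof. by apply/funext => y; rewrite mxE. Qed.

Lemma dPD i f g : derivable_mx f -> derivable_mx g ->
  dP i (fun x => f x + g x) = (fun x => dP i f x + dP i g x).
Proof.
move=> fd gd; apply/funext => x; apply/matrixP => a b; rewrite !mxE.
rewrite (_ : (fun y => _) = (fun y => f y a b) + (fun y => g y a b)).
  by rewrite deriveD.
by apply/funext => y; rewrite !mxE.
Qed.

Lemma derivable_mxD f g :
  derivable_mx f -> derivable_mx g -> derivable_mx (fun x => f x + g x).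
Proof.
move=> fd gd i x a b.
rewrite (_ : (fun y => _) = (fun y => f y a b) + (fun y => g y a b)).
  exact: derivableD.
by apply/funext => y; rewrite !mxE.
Qed.

Lemma iterDD s f g : derivable_upto (size s) f -> derivable_upto (size s) g ->
  Defs.iterD s (fun x => f x + g x) = (fun x => Defs.iterD s f x + Defs.iterD s g x).
Proof.
elim: s => [//|i s IHs] /= fs gs.
rewrite IHs; first by apply: dPD; [exact: fs | exact: gs].
  exact: derivable_upto_le fs.
exact: derivable_upto_le gs.
Qed.

Lemma derivable_uptoD N f g :
  derivable_upto N f -> derivable_upto N g -> derivable_upto N (fun x => f x + g x).
Proof.
move=> fN gN s sN; have sN' := ltnW sN.
rewrite iterDD; first by apply: derivable_mxD; [exact: fN | exact: gN].
  exact: derivable_upto_le sN' fN.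
exact: derivable_upto_le sN' gN.
Qed.

Lemma dPN i f : derivable_mx f -> dP i (fun x => - f x) = (fun x => - dP i f x).
Proof.
move=> fd; apply/funext => x; apply/matrixP => a b; rewrite !mxE.
rewrite (_ : (fun y => _) = - (fun y => f y a b)); first by rewrite deriveN.
by apply/funext => y; rewrite !mxE.
Qed.

Lemma derivable_mxN f : derivable_mx f -> derivable_mx (fun x => - f x).
Proof.
move=> fd i x a b; rewrite (_ : (fun y => _) = - (fun y => f y a b)).
  exact: derivableN.
by apply/funext => y; rewrite !mxE.
Qed.

Lemma iterDN s f : derivable_upto (size s) f ->
  Defs.iterD s (fun x => - f x) = (fun x => - Defs.iterD s f x).
Proof.
elim: s => [//|i s IHs] /= fs.
rewrite IHs; first by apply: dPN; exact: fs.
exact: derivable_upto_le fs.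
Qed.

Lemma derivable_uptoN N f : derivable_upto N f -> derivable_upto N (fun x => - f x).
Proof.
move=> fN s sN; rewrite iterDN; first by apply: derivable_mxN; exact: fN.
exact: derivable_upto_le (ltnW sN) fN.
Qed.

Lemma dPZ i (c : R) f : derivable_mx f ->
  dP i (fun x => c *: f x) = (fun x => c *: dP i f x).
Proof.
move=> fd; apply/funext => x; apply/matrixP => a b; rewrite !mxE.
rewrite (_ : (fun y => _) = c \*: (fun y => f y a b)); first by rewrite deriveZ.
by apply/funext => y; rewrite !mxE.
Qed.

Lemma derivable_mxZ (c : R) f : derivable_mx f -> derivable_mx (fun x => c *: f x).
Proof.
move=> fd i x a b; rewrite (_ : (fun y => _) = c \*: (fun y => f y a b)).
  exact: derivableZ.
by apply/funext => y; rewrite !mxE.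
Qed.

Lemma iterDZ s (c : R) f : derivable_upto (size s) f ->
  Defs.iterD s (fun x => c *: f x) = (fun x => c *: Defs.iterD s f x).
Proof.
elim: s => [//|i s IHs] /= fs.
rewrite IHs; first by apply: dPZ; exact: fs.
exact: derivable_upto_le fs.
Qed.

Lemma derivable_uptoZ N (c : R) f :
  derivable_upto N f -> derivable_upto N (fun x => c *: f x).
Proof.
move=> fN s sN; rewrite iterDZ; first by apply: derivable_mxZ; exact: fN.
exact: derivable_upto_le (ltnW sN) fN.
Qed.

Lemma dP_sum i m (F : 'I_m -> field) : (forall p, derivable_mx (F p)) ->
  dP i (fun x => \sum_(p < m) F p x) = (fun x => \sum_(p < m) dP i (F p) x).
Proof.
move=> Fd; apply/funext => x; apply/matrixP => a b; rewrite !mxE summxE.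
rewrite (_ : (fun y => _) = \sum_(p < m) (fun y => F p y a b)); last first.
  by apply/funext => y; rewrite summxE fct_sumE.
rewrite derive_sum; last by move=> p; exact: Fd.
by apply: eq_bigr => p _; rewrite mxE.
Qed.

Lemma derivable_mx_sum m (F : 'I_m -> field) :
  (forall p, derivable_mx (F p)) -> derivable_mx (fun x => \sum_(p < m) F p x).
Proof.
move=> Fd i x a b.
rewrite (_ : (fun y => _) = \sum_(p < m) (fun y => F p y a b)).
  by apply: derivable_sum => p; exact: Fd.
by apply/funext => y; rewrite summxE fct_sumE.
Qed.

Lemma iterD_sum s m (F : 'I_m -> field) : (forall p, derivable_upto (size s) (F p)) ->
  Defs.iterD s (fun x => \sum_(p < m) F p x) = (fun x => \sum_(p < m) Defs.iterD s (F p) x).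
Proof.
elim: s => [//|i s IHs] /= Fs.
rewrite IHs => [|p]; last exact: derivable_upto_le (Fs p).
by apply: dP_sum => p; exact: Fs.
Qed.

Lemma derivable_upto_sum N m (F : 'I_m -> field) :
  (forall p, derivable_upto N (F p)) ->
  derivable_upto N (fun x => \sum_(p < m) F p x).
Proof.
move=> FN s sN; rewrite iterD_sum => [|p]; last exact: derivable_upto_le (ltnW sN) (FN p).
by apply: derivable_mx_sum => p; exact: FN.
Qed.

Lemma dPM i f g : derivable_mx f -> derivable_mx g ->
  dP i (fun x => f x *m g x) = (fun x => dP i f x *m g x + f x *m dP i g x).
Proof.
move=> fd gd; apply/funext => x; apply/matrixP => a b; rewrite !mxE.
rewrite (_ : (fun y => _) = \sum_(k < r) ((fun y => f y a k) * (fun y => g y k b)));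
  last by apply/funext => y; rewrite mxE fct_sumE.
rewrite derive_sum => [|k]; last by apply: derivableM; [exact: fd | exact: gd].
rewrite -big_split /=; apply: eq_bigr => k _.
rewrite deriveM; [|exact: fd | exact: gd].
by rewrite !mxE /= addrC; congr (_ + _); exact: mulrC.
Qed.

Lemma derivable_mxM f g :
  derivable_mx f -> derivable_mx g -> derivable_mx (fun x => f x *m g x).
Proof.
move=> fd gd i x a b.
rewrite (_ : (fun y => _) = \sum_(k < r) ((fun y => f y a k) * (fun y => g y k b))).
  by apply: derivable_sum => k; apply: derivableM; [exact: fd | exact: gd].
by apply/funext => y; rewrite mxE fct_sumE.
Qed.

Lemma derivable_uptoM N f g :
  derivable_upto N f -> derivable_upto N g -> derivable_upto N (fun x => f x *m g x).
Proof.
elim: N f g => [f g _ _ s | N IHN f g fN gN s]; first by rewrite ltn0.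
case/lastP: s => [_ | s i].
  by apply: derivable_mxM; [exact: (fN [::]) | exact: (gN [::])].
rewrite size_rcons ltnS => sN.
rewrite iterD_rcons dPM; [|exact: (fN [::]) | exact: (gN [::])].
have dfg : derivable_upto N (fun x => dP i f x *m g x).
  by apply: IHN; [exact: derivable_upto_dP | exact: derivable_upto_le gN].
have fdg : derivable_upto N (fun x => f x *m dP i g x).
  by apply: IHN; [exact: derivable_upto_le fN | exact: derivable_upto_dP].
exact: derivable_uptoD dfg fdg s sN.
Qed.

Lemma is_derive_coord (x v : 'rV[R]_n) k :
  is_derive x v (fun y : 'rV[R]_n => y ord0 k) (v ord0 k).
Proof.
have quot : \forall h \near (0:R)^',
    h^-1 *: (((fun y : 'rV[R]_n => y ord0 k) \o shift x) (h *: v) - x ord0 k)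
    = v ord0 k.
  near=> h; have h0 : h != 0 by near: h; exact: nbhs_dnbhs_neq.
  by rewrite /= /shift /= !mxE addrK [_ *: _]mulrA mulVf // mul1r.
have quot_cvg := cvg_near_cst _ quot.
split; first by apply/cvg_ex; exists (v ord0 k); exact: quot_cvg.
rewrite /derive; apply: cvg_lim; last exact: quot_cvg.
exact: norm_hausdorff.
Unshelve. all: by end_near.
Qed.

Definition coord_mx k : field := fun x => (Defs.coord x k)%:M.

Lemma coord_mx_entry k (a b : 'I_r) :
  (fun y => coord_mx k y a b) = if a == b then fun y => y ord0 k else cst 0.
Proof. by apply/funext => y; rewrite /coord_mx /Defs.coord !mxE; case: (a == b). Qed.

Lemma derivable_coord_mx k : derivable_mx (coord_mx k).
Proof.
move=> i x a b; rewrite coord_mx_entry; case: (a == b); last exact: derivable_cst.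
by case: (is_derive_coord x (eb i) k).
Qed.

Lemma dP_coord_mx i k : dP i (coord_mx k) = (fun _ => (eb i ord0 k)%:M).
Proof.
apply/funext => x; apply/matrixP => a b; rewrite mxE coord_mx_entry [RHS]mxE.
case: (a == b); last by rewrite derive_cst.
by case: (is_derive_coord x (eb i) k).
Qed.

Lemma dP_cst i (C : 'M[R]_r) : dP i (fun _ : 'rV[R]_n => C) = (fun _ => 0).
Proof.
apply/funext => x; apply/matrixP => a b; rewrite !mxE.
by rewrite (_ : (fun _ => _) = cst (C a b)) // derive_cst.
Qed.

Lemma iterD_cst s (C : 'M[R]_r) :
  Defs.iterD s (fun _ : 'rV[R]_n => C) = (fun _ => if s is [::] then C else 0).
Proof. by elim: s => [//|i s IHs] /=; rewrite IHs dP_cst. Qed.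

Lemma smooth_coord_mx k : smooth_mx (coord_mx k).
Proof.
case/lastP=> [|s i]; first exact: derivable_coord_mx.
by rewrite iterD_rcons dP_coord_mx iterD_cst => j x a b; exact: derivable_cst.
Qed.

Lemma coord_mxE k f : (fun x => Defs.coord x k *: f x) = (fun x => coord_mx k x *m f x).
Proof. by apply/funext => x; rewrite /coord_mx mul_scalar_mx. Qed.

Lemma dP_coordZ i k f : derivable_mx f ->
  dP i (fun x => Defs.coord x k *: f x) =
  (fun x => eb i ord0 k *: f x + Defs.coord x k *: dP i f x).
Proof.
move=> fd; rewrite coord_mxE (dPM _ (derivable_coord_mx (k := k)) fd).
by apply/funext => x; rewrite dP_coord_mx /coord_mx !mul_scalar_mx.
Qed.

Lemma smooth_mx_derivable f : smooth_mx f -> derivable_mx f.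
Proof. by move=> fs; exact: (fs [::]). Qed.

Lemma smooth_mx_dP i f : smooth_mx f -> smooth_mx (dP i f).
Proof. by move=> fs s; rewrite -iterD_rcons; exact: fs. Qed.

Lemma smooth_mxD f g : smooth_mx f -> smooth_mx g -> smooth_mx (fun x => f x + g x).
Proof. by move=> /smooth_mxE fs /smooth_mxE gs; apply/smooth_mxE => N; exact: derivable_uptoD. Qed.

Lemma smooth_mxN f : smooth_mx f -> smooth_mx (fun x => - f x).
Proof. by move=> /smooth_mxE fs; apply/smooth_mxE => N; exact: derivable_uptoN. Qed.

Lemma smooth_mxB f g : smooth_mx f -> smooth_mx g -> smooth_mx (fun x => f x - g x).
Proof. by move=> fs gs; exact: smooth_mxD fs (smooth_mxN gs). Qed.

Lemma smooth_mxZ (c : R) f : smooth_mx f -> smooth_mx (fun x => c *: f x).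
Proof. by move=> /smooth_mxE fs; apply/smooth_mxE => N; exact: derivable_uptoZ. Qed.

Lemma smooth_mx_sum m (F : 'I_m -> field) :
  (forall p, smooth_mx (F p)) -> smooth_mx (fun x => \sum_(p < m) F p x).
Proof.
move=> Fs; apply/smooth_mxE => N; apply: derivable_upto_sum => p.
by move/smooth_mxE: (Fs p).
Qed.

Lemma smooth_mxM f g : smooth_mx f -> smooth_mx g -> smooth_mx (fun x => f x *m g x).
Proof. by move=> /smooth_mxE fs /smooth_mxE gs; apply/smooth_mxE => N; exact: derivable_uptoM. Qed.

Lemma smooth_mx_coordZ k f : smooth_mx f -> smooth_mx (fun x => Defs.coord x k *: f x).
Proof. by move=> fs; rewrite coord_mxE; exact: smooth_mxM (smooth_coord_mx (k := k)) fs. Qed.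

Lemma smooth_mx_lie f g : smooth_mx f -> smooth_mx g -> smooth_mx (fun x => lie (f x) (g x)).
Proof. by move=> fs gs; apply: smooth_mxB; apply: smooth_mxM. Qed.

Lemma dP_lie i f g : derivable_mx f -> derivable_mx g ->
  dP i (fun x => lie (f x) (g x)) =
  (fun x => lie (dP i f x) (g x) + lie (f x) (dP i g x)).
Proof.
move=> fd gd; have fgd := derivable_mxM fd gd; have gfd := derivable_mxM gd fd.
rewrite /lie (dPD _ fgd (derivable_mxN gfd)) (dPN _ gfd) !(dPM _ fd gd) (dPM _ gd fd).
by apply/funext => x; lmod R.
Qed.

Lemma dPC i j f : smooth_mx f -> dP i (dP j f) = dP j (dP i f).
Proof.
move=> fs; apply/funext => x; apply/matrixP => a b.
rewrite [LHS]mxE [RHS]mxE !dP_entry.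
have d1 k l y : derivable ('D_(eb l) (fun y => f y a b)) y (eb k).
  by rewrite -dP_entry; exact: (fs [:: l] k y a b).
have d2 k l m y :
    derivable ('D_(eb l) ('D_(eb m) (fun y => f y a b))) y (eb k).
  by rewrite -!dP_entry; exact: (fs [:: l; m] k y a b).
by apply: schwarz_derive => y; [exact: (fs [::]) | exact: (fs [::]) | exact: d1
  | exact: d1 | exact: d2 | exact: d2 | exact: d2].
Qed.

End SmoothFields.

Lemma sum_ebasisZ (R : realType) n r k (G : 'I_n -> 'M[R]_r) :
  \sum_p (@ebasis R n k) ord0 p *: G p = G k.
Proof.
rewrite (bigD1 k) //= big1 ?addr0 => [|p pk]; first by rewrite /ebasis mxE !eqxx scale1r.
by rewrite /ebasis mxE eqxx /= (negbTE pk) scale0r.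
Qed.

(* Only the following properties of the covariant derivative [D] and of its
   curvature [F] enter the computation of [L]; [S] is the class of fields on
   which [D] obeys the Leibniz rules (smooth fields in the application). *)
Section ContractedCurvature.
Variables (R : realType) (n r : nat).
Local Notation field := ('rV[R]_n -> 'M[R]_r).
Local Notation co y k := (Defs.coord y k).
Local Notation eb k := (@ebasis R n k).

Variables (D : 'I_n -> field -> field) (F : 'I_n -> 'I_n -> field).
Variable S : field -> Prop.
Hypothesis S_F : forall p j, S (F p j).
Hypothesis S_D : forall p f, S f -> S (D p f).
Hypothesis S_add : forall f g, S f -> S g -> S (fun y => f y + g y).
Hypothesis S_scale : forall c f, S f -> S (fun y => c *: f y).
Hypothesis S_coord : forall k f, S f -> S (fun y => co y k *: f y).
Hypothesis S_sum : forall G : 'I_n -> field, (forall p, S (G p)) -> S (fun y => \sum_p G p y).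
Hypothesis DD : forall k f g, S f -> S g ->
  D k (fun y => f y + g y) = (fun y => D k f y + D k g y).
Hypothesis DZ : forall k c f, S f -> D k (fun y => c *: f y) = (fun y => c *: D k f y).
Hypothesis D_sum : forall k (G : 'I_n -> field), (forall p, S (G p)) ->
  D k (fun y => \sum_p G p y) = (fun y => \sum_p D k (G p) y).
Hypothesis D_coordZ : forall k p f, S f ->
  D k (fun y => co y p *: f y) = (fun y => eb k ord0 p *: f y + co y p *: D k f y).
Hypothesis D_commutator : forall k p f, S f -> forall y,
  D k (D p f) y = D p (D k f) y + lie (F k p y) (f y).
Hypothesis bianchi : forall k p j y, D k (F p j) y - D j (F p k) y = D p (F k j) y.
Hypothesis F_anti : forall p j y, F p j y = - F j p y.
Hypothesis soliton : forall j,
  (fun y => \sum_p D p (F p j) y) = (fun y => 2^-1 *: \sum_q co y q *: F q j y).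

Variables (v : 'rV[R]_n) (be : R).

Definition Wcoef p y := co v p + be * co y p.

Definition iW (G : 'I_n -> field) : field :=
  fun y => \sum_p co v p *: G p y + be *: \sum_p co y p *: G p y.

Lemma iWE G y : iW G y = \sum_p Wcoef p y *: G p y.
Proof.
rewrite /iW scaler_sumr -big_split /=; apply: eq_bigr => p _.
by rewrite /Wcoef scalerDl scalerA.
Qed.

Lemma S_iW G : (forall p, S (G p)) -> S (iW G).
Proof.
move=> SG; apply: S_add; first by apply: S_sum => p; exact: S_scale.
by apply: S_scale; apply: S_sum => p; exact: S_coord.
Qed.

Lemma D_iW k G : (forall p, S (G p)) ->
  D k (iW G) = (fun y => be *: G k y + \sum_p Wcoef p y *: D k (G p) y).
Proof.
move=> SG; apply/funext => y; rewrite /iW DD; last first.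
- by apply: S_scale; apply: S_sum => p; exact: S_coord.
- by apply: S_sum => p; exact: S_scale.
rewrite D_sum => [|p]; last exact: S_scale.
rewrite DZ; last by apply: S_sum => p; exact: S_coord.
rewrite D_sum => [|p]; last exact: S_coord.
under eq_bigr => p _ do rewrite DZ //.
under [X in be *: X]eq_bigr => p _ do rewrite D_coordZ //.
rewrite big_split /= sum_ebasisZ -(iWE (fun p => D k (G p)) y) /iW /=.
by lmod R.
Qed.

Definition theta j := iW (F^~ j).

Lemma S_theta j : S (theta j).
Proof. by apply: S_iW => p; exact: S_F. Qed.

Lemma D_theta k j :
  D k (theta j) = (fun y => be *: F k j y + \sum_p Wcoef p y *: D k (F p j) y).
Proof. by rewrite /theta D_iW // => p; exact: S_F. Qed.

Definition dtheta k j y := (be + be) *: F k j y + iW (fun p => D p (F k j)) y.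

Lemma dthetaE k j : (fun y => D k (theta j) y - D j (theta k) y) = dtheta k j.
Proof.
apply/funext => y; rewrite !D_theta /dtheta iWE (F_anti j k y).
have <- : \sum_p Wcoef p y *: D k (F p j) y - \sum_p Wcoef p y *: D j (F p k) y
          = \sum_p Wcoef p y *: D p (F k j) y.
  by rewrite -sumrB; apply: eq_bigr => p _; rewrite -scalerBr bianchi.
by lmod R.
Qed.

Lemma D_dtheta k j : D k (dtheta k j) =
  (fun y => (be + be + be) *: D k (F k j) y
            + \sum_p Wcoef p y *: D k (D p (F k j)) y).
Proof.
have S_DF p : S (D p (F k j)) by apply: S_D; exact: S_F.
rewrite /dtheta DD; last 2 first.
- by apply: S_scale; exact: S_F.
- exact: S_iW.
rewrite DZ ?S_F // D_iW //; apply/funext => y.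
by lmod R.
Qed.

Lemma D_soliton p j : D p (fun y => \sum_k D k (F k j) y) =
  (fun y => 2^-1 *: (F p j y + \sum_q co y q *: D p (F q j) y)).
Proof.
rewrite soliton DZ; last by apply: S_sum => q; apply: S_coord; exact: S_F.
rewrite D_sum => [|q]; last by apply: S_coord; exact: S_F.
apply/funext => y; congr (_ *: _).
under eq_bigr => q _ do rewrite D_coordZ ?S_F //.
by rewrite big_split /= sum_ebasisZ.
Qed.

Variables (j : 'I_n) (x : 'rV[R]_n).
Local Notation J := (\sum_p D p (F p j) x).

Definition cross_term := \sum_p Wcoef p x *: \sum_q co x q *: D p (F q j) x.
Definition bracket_term := \sum_k \sum_p Wcoef p x *: lie (F k p x) (F k j x).

(* The Ricci identity moves [D k] past [D p]; the soliton equation then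
   evaluates [\sum_k D k (F k j)]. *)
Lemma div_dtheta : \sum_k D k (dtheta k j) x =
  (be + be + be) *: J + (2^-1 *: theta j x + 2^-1 *: cross_term) + bracket_term.
Proof.
rewrite (eq_bigr (fun k => (be + be + be) *: D k (F k j) x
            + \sum_p Wcoef p x *: D k (D p (F k j)) x)); last first.
  by move=> k _; rewrite D_dtheta.
rewrite big_split /= -scaler_sumr.
have -> : \sum_k \sum_p Wcoef p x *: D k (D p (F k j)) x
        = \sum_k \sum_p Wcoef p x *: D p (D k (F k j)) x + bracket_term.
  rewrite /bracket_term -big_split; apply: eq_bigr => k _.
  rewrite -big_split; apply: eq_bigr => p _.
  by rewrite (D_commutator _ _ (S_F k j)) scalerDr.
rewrite exchange_big /=.
have -> : \sum_p \sum_k Wcoef p x *: D p (D k (F k j)) x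
    = \sum_p Wcoef p x *: (2^-1 *: (F p j x + \sum_q co x q *: D p (F q j) x)).
  apply: eq_bigr => p _; rewrite -scaler_sumr; congr (_ *: _).
  have S_DF k : S (D k (F k j)) by apply: S_D; exact: S_F.
  by have /= <- := congr1 (fun f => f x) (D_sum p S_DF); rewrite D_soliton.
have -> : \sum_p Wcoef p x *: (2^-1 *: (F p j x + \sum_q co x q *: D p (F q j) x))
    = 2^-1 *: theta j x + 2^-1 *: cross_term.
  rewrite /theta iWE /cross_term !scaler_sumr -big_split /=.
  by apply: eq_bigr => p _; lmod R.
by rewrite addrA.
Qed.

Lemma bracket_theta : \sum_k lie (F k j x) (theta k x) = bracket_term.
Proof.
apply: eq_bigr => k _; rewrite /theta iWE lie_sumr; apply: eq_bigr => p _.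
by rewrite lieZr (F_anti p k x) lieNr -lie_anti.
Qed.

Lemma ix_dtheta : \sum_k co x k *: dtheta k j x =
  (be + be) *: (2 *: J) + cross_term.
Proof.
rewrite /dtheta; under eq_bigr => k _ do rewrite scalerDr iWE.
rewrite big_split /=; congr (_ + _).
  have -> : J = 2^-1 *: \sum_k co x k *: F k j x by exact: (congr1 (fun f => f x) (soliton j)).
  have -> : \sum_k co x k *: ((be + be) *: F k j x)
          = (be + be) *: \sum_k co x k *: F k j x.
    by rewrite scaler_sumr; apply: eq_bigr => k _; rewrite !scalerA mulrC.
  by lmod_split R; field.
rewrite /cross_term; under eq_bigr => k _ do rewrite scaler_sumr.
rewrite exchange_big /=; apply: eq_bigr => p _; rewrite scaler_sumr.
by apply: eq_bigr => q _; rewrite !scalerA mulrC.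
Qed.

Lemma L_theta :
  - ( - \sum_k D k (fun y => D k (theta j) y - D j (theta k) y) x
      + \sum_k lie (F k j x) (theta k x)
      + 2^-1 *: \sum_k co x k *: (D k (theta j) x - D j (theta k) x) )
  = be *: J + 2^-1 *: theta j x.
Proof.
have -> : \sum_k co x k *: (D k (theta j) x - D j (theta k) x)
        = \sum_k co x k *: dtheta k j x.
  by apply: eq_bigr => k _; rewrite -dthetaE.
under eq_bigr => k _ do rewrite dthetaE.
rewrite div_dtheta bracket_theta ix_dtheta.
by lmod_split R; field.
Qed.

End ContractedCurvature.

Section BracketExpansions.
Variables (R : realType) (n r : nat).
Local Notation M := 'M[R]_r.

Let expand_lie := (mulmxBl, mulmxBr, mulmxDl, mulmxDr, mulmxA, mulNmx, mulmxN).

(* The algebra behind the Ricci identity: [DD k p] stands for the second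
   partials of a field [f], [DA k p] for the partials of the connection [A]. *)
Lemma ricci_expansion (DD DA : 'I_n -> 'I_n -> M) (Df A : 'I_n -> M) (f : M) k p :
  DD k p = DD p k ->
  DD k p + (lie (DA k p) f + lie (A p) (Df k)) + lie (A k) (Df p + lie (A p) f)
  = DD p k + (lie (DA p k) f + lie (A k) (Df p)) + lie (A p) (Df k + lie (A k) f)
    + lie (DA k p - DA p k + lie (A k) (A p)) f.
Proof. by move=> ->; rewrite /lie !expand_lie; lmod R. Qed.

Lemma bianchi_expansion (D2 : 'I_n -> 'I_n -> 'I_n -> M) (DA : 'I_n -> 'I_n -> M)
    (A : 'I_n -> M) k p j :
  (forall a b c, D2 a b c = D2 b a c) ->
  let E a b c := D2 a b c - D2 a c b + (lie (DA a b) (A c) + lie (A b) (DA a c))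
       + lie (A a) (DA b c - DA c b + lie (A b) (A c)) in
  E k p j - E j p k = E p k j.
Proof.
move=> D2C E; rewrite /E (D2C k p j) (D2C k j p) (D2C j p k) /lie !expand_lie.
by lmod R.
Qed.

End BracketExpansions.

Section ConnectionCalculus.
Variables (R : realType) (n r : nat) (A : gform R n r).
Hypothesis smoothA : forall i, smooth_mx (A i).
Local Notation field := ('rV[R]_n -> 'M[R]_r).
Implicit Types f g : field.

Lemma smooth_curv p j : smooth_mx (curv A p j).
Proof.
apply: smooth_mxD; first by apply: smooth_mxB; apply: smooth_mx_dP.
exact: smooth_mx_lie.
Qed.

Lemma smooth_nabla p f : smooth_mx f -> smooth_mx (nabla A p f).
Proof. by move=> fs; apply: smooth_mxD; [exact: smooth_mx_dP | exact: smooth_mx_lie]. Qed.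

Lemma nablaD k f g : smooth_mx f -> smooth_mx g ->
  nabla A k (fun y => f y + g y) = (fun y => nabla A k f y + nabla A k g y).
Proof.
move=> fs gs; apply/funext => y.
rewrite /nabla (dPD _ (smooth_mx_derivable fs) (smooth_mx_derivable gs)); cbv beta.
rewrite lieDr.
by rewrite addrACA.
Qed.

Lemma nablaZ k (c : R) f : smooth_mx f ->
  nabla A k (fun y => c *: f y) = (fun y => c *: nabla A k f y).
Proof.
move=> fs; apply/funext => y.
by rewrite /nabla (dPZ _ _ (smooth_mx_derivable fs)); cbv beta; rewrite lieZr -scalerDr.
Qed.

Lemma nabla_sum k (G : 'I_n -> field) : (forall p, smooth_mx (G p)) ->
  nabla A k (fun y => \sum_p G p y) = (fun y => \sum_p nabla A k (G p) y).
Proof.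
move=> Gs; apply/funext => y.
by rewrite /nabla (dP_sum _ (fun p => smooth_mx_derivable (Gs p))) lie_sumr -big_split.
Qed.

Lemma nabla_coordZ k p f : smooth_mx f ->
  nabla A k (fun y => Defs.coord y p *: f y) =
  (fun y => @ebasis R n k ord0 p *: f y + Defs.coord y p *: nabla A k f y).
Proof.
move=> fs; apply/funext => y.
rewrite /nabla (dP_coordZ _ _ (smooth_mx_derivable fs)); cbv beta.
by rewrite lieZr -addrA -scalerDr.
Qed.

Lemma nabla_nablaE k p f y : smooth_mx f ->
  nabla A k (nabla A p f) y = dP k (dP p f) y
    + (lie (dP k (A p) y) (f y) + lie (A p y) (dP k f y))
    + lie (A k y) (dP p f y + lie (A p y) (f y)).
Proof.
move=> fs; have dfd : derivable_mx (dP p f) by exact/smooth_mx_derivable/smooth_mx_dP.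
have Afd : derivable_mx (fun x => lie (A p x) (f x)).
  by apply: smooth_mx_derivable; exact: smooth_mx_lie.
rewrite {1}/nabla (dPD _ dfd Afd) /=.
by rewrite (dP_lie _ (smooth_mx_derivable (@smoothA p)) (smooth_mx_derivable fs)).
Qed.

Lemma nabla_curvE a b c y :
  nabla A a (curv A b c) y = dP a (dP b (A c)) y - dP a (dP c (A b)) y
    + (lie (dP a (A b) y) (A c y) + lie (A b y) (dP a (A c) y))
    + lie (A a y) (dP b (A c) y - dP c (A b) y + lie (A b y) (A c y)).
Proof.
have dd p q : derivable_mx (dP p (A q)).
  by apply: smooth_mx_derivable; exact: smooth_mx_dP.
have ddB : derivable_mx (fun x => dP b (A c) x - dP c (A b) x).
  exact: derivable_mxD (dd b c) (derivable_mxN (dd c b)).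
have lied : derivable_mx (fun x => lie (A b x) (A c x)).
  by apply: smooth_mx_derivable; exact: smooth_mx_lie.
rewrite {1}/nabla {1}/curv (dPD _ ddB lied) /= (dPD _ (dd b c) (derivable_mxN (dd c b))).
rewrite /= (dPN _ (dd c b)) /=.
by rewrite (dP_lie _ (smooth_mx_derivable (@smoothA b)) (smooth_mx_derivable (@smoothA c))).
Qed.

Lemma nabla_commutator k p f : smooth_mx f -> forall y,
  nabla A k (nabla A p f) y = nabla A p (nabla A k f) y + lie (curv A k p y) (f y).
Proof.
move=> fs y; rewrite !nabla_nablaE //.
apply: (@ricci_expansion R n r (fun a b => dP a (dP b f) y)
  (fun a b => dP a (A b) y) (fun a => dP a f y) (A^~ y)).
by rewrite dPC.
Qed.

Lemma bianchi k p j y :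
  nabla A k (curv A p j) y - nabla A j (curv A p k) y = nabla A p (curv A k j) y.
Proof.
rewrite !nabla_curvE.
apply: (@bianchi_expansion R n r (fun a b c => dP a (dP b (A c)) y)
  (fun a b => dP a (A b) y) (A^~ y)).
by move=> a b c; rewrite dPC.
Qed.

Lemma curv_anti p j y : curv A p j y = - curv A j p y.
Proof. by rewrite /curv /lie; lmod R. Qed.

End ConnectionCalculus.

Lemma L_contraction (R : realType) (n r : nat) (A : gform R n r) v (be : R) j x :
    (forall i, smooth_mx (A i)) -> soliton_eq A ->
  let th := theta (curv A) v be in
  Lop A th j x = be *: Jform A j x + 2^-1 *: th j x.
Proof.
move=> smoothA sol th.
apply: (L_theta (smooth_curv smoothA) (smooth_nabla smoothA)
  (fun f g => @smooth_mxD R n r f g) (@smooth_mxZ R n r) (@smooth_mx_coordZ R n r)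
  (@smooth_mx_sum R n r n) (nablaD A) (nablaZ A) (nabla_sum A) (nabla_coordZ A)
  (nabla_commutator smoothA) (bianchi smoothA) (curv_anti A)).
move=> k; apply/funext => y; apply/eqP; rewrite -subr_eq0; apply/eqP; exact: sol.
Qed.

Theorem mainTheorem11 (R : realType) (n r : nat) (g : set 'M[R]_r)
  (A : gform R n r) :
  lie_subalg_so g -> S01 g A ->
  (forall j x, Lop A (Jform A) j x = Jform A j x) /\
  (forall (V : 'rV[R]_n) j x, Lop A (iVF A V) j x = 2^-1 *: iVF A V j x).
Proof.
move=> _ [_ smoothA sol _]; split => [j x | V j x].
  have EJ : Jform A = theta (curv A) 0 2^-1.
    apply/funext => k; apply/funext => y; apply/eqP; rewrite -subr_eq0.
    rewrite /theta /iW big1 => [|p _]; last by rewrite /Defs.coord mxE scale0r.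
    by rewrite add0r /Jform sol.
  by rewrite EJ L_contraction // EJ; lmod_split R; field.
have -> : iVF A V = theta (curv A) V 0.
  by apply/funext => k; apply/funext => y; rewrite /theta /iW scale0r addr0.
by rewrite L_contraction // scale0r add0r.
Qed.
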